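(* Let $q$ be a prime power and let $M=(m_{ij})$ be a $2\times 2$ matrix with all $m_{ij}\in\mathbb{F}_q$. Let $N=(n_{ij})$ be the $2\times 2$ matrix with $n_{11}=m_{11}$, $n_{22}=m_{22}$, $n_{21}=0$, $n_{12}=m_{12}+m_{21}$. Then $\mathrm{Num}'_0(M)_q=\mathrm{Num}'_0(N)_q$ and $\mathrm{Num}_k(M)_q=\mathrm{Num}_k(N)_q$ for all $k\in\mathbb{F}_q$. Moreover: (i) If $q\equiv -1\pmod 4$, then $\mathrm{Num}'_0(M)_q=\emptyset$. (ii) Assume $q$ is even. If $m_{22}+m_{12}+m_{21}+m_{11}\neq 0$, then $\mathrm{Num}'_0(M)_q=\mathbb{F}_q^*$ and $\sharp(\mathrm{Num}_k(M)_q)\ge q/2$ for all $k\in\mathbb{F}_q^*$. If $m_{22}+m_{12}+m_{21}+m_{11}=0$, then $\mathrm{Num}'_0(M)_q=\{0\}$ and for each fixed $k\in\mathbb{F}_q^*$ either $\mathrm{Num}_k(M)_q=\mathbb{F}_q$ or $\sharp(\mathrm{Num}_k(M)_q)=1$. If $m_{12}+m_{21}=0$ and $m_{11}\neq m_{22}$, then $\mathrm{Num}_k(M)_q=\mathbb{F}_q$ for all $k\in\mathbb{F}_q^*$. (iii) Assume $q\equiv 1\pmod 4$. (iii1) If $m_{12}+m_{21}\neq 0$, then $\mathrm{Num}_0(M)_q$ contains at least $(q-1)/2$ elements of $\mathbb{F}_q^*$. (iii2) Assume $m_{12}+m_{21}=0$. If $m_{11}=m_{22}$, then $\mathrm{Num}_k(M)_q=\{km_{11}\}$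 for all $k\in\mathbb{F}_q$ and $0\in\mathrm{Num}'_0(M)_q$. If $m_{11}\neq m_{22}$, then $\sharp(\mathrm{Num}_k(M)_q)\le (q+1)/2$ for all $k\in\mathbb{F}_q$, $\sharp(\mathrm{Num}_0(M)_q)=(q+1)/2$ and $\sharp(\mathrm{Num}'_0(M)_q)=(q-1)/2$.
   Context: The Hermitian form on $\mathbb{F}_{q^2}^n$ is $\langle u,v\rangle=\sum_i u_i^q v_i$; for $u=(x_1,\dots,x_n)\in\mathbb{F}_q^n$ and $M=(m_{ij})$ with entries in $\mathbb{F}_q$ one has $\langle u,u\rangle=\sum_i x_i^2$ and $\langle u,Mu\rangle=\sum_{i,j}m_{ij}x_ix_j$. For such $M$ and $k\in\mathbb{F}_q$, $\mathrm{Num}_k(M)_q=\{\langle u,Mu\rangle: u\in\mathbb{F}_q^n,\ \langle u,u\rangle=k\}$, and (for $n\ge 2$) $\mathrm{Num}'_0(M)_q=\{\langle u,Mu\rangle: u\in\mathbb{F}_q^n\setminus\{0\},\ \langle u,u\rangle=0\}$. *)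

From HB Require Import structures.
From mathcomp Require Import all_boot all_order all_algebra all_field.
Set Implicit Arguments. Unset Strict Implicit. Unset Printing Implicit Defensive.
Import Order.TTheory GRing.Theory.
Local Open Scope ring_scope.

Definition herm_self (F : finFieldType) (n : nat) (u : 'rV[F]_n) : F :=
  \sum_(i < n) u 0 i ^+ 2.

Definition herm_M (F : finFieldType) (n : nat) (M : 'M[F]_n) (u : 'rV[F]_n) : F :=
  \sum_(i < n) \sum_(j < n) M i j * u 0 i * u 0 j.

Definition Numk (F : finFieldType) (n : nat) (k : F) (M : 'M[F]_n) : {set F} :=
  [set herm_M M u | u in [set u : 'rV[F]_n | herm_self u == k]].

Definition Num0' (F : finFieldType) (n : nat) (M : 'M[F]_n) : {set F} :=
  [set herm_M M u | u in [set u : 'rV[F]_n | (u != 0) && (herm_self u == 0)]].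

Definition Nmat (F : finFieldType) (n : nat) (M : 'M[F]_n) : 'M[F]_n :=
  \matrix_(i < n, j < n)
    (if i == j then M i j else if (i < j)%N then M i j + M j i else 0).

From HB Require Import structures.
From mathcomp Require Import all_boot all_order all_algebra all_field.
From mathcomp Require Import zify ring.
Set Implicit Arguments. Unset Strict Implicit. Unset Printing Implicit Defensive.
Import Order.TTheory GRing.Theory.
Local Open Scope ring_scope.

(* Both sets only see the binary quadratic form
   Q(x, y) = m11 x^2 + (m12 + m21) x y + m22 y^2, which M and N share, evaluated
   on the level sets of x^2 + y^2.  If q = 3 mod 4, -1 is not a square and
   x^2 + y^2 = 0 only at 0.  In characteristic 2, x^2 + y^2 = (x + y)^2 and
   squaring is bijective, so x^2 + y^2 = t^2 is the line y = t + x, on which Q is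
   a quadratic polynomial in x, whose fibres have at most two points.  If
   q = 1 mod 4, some i has i^2 = -1, the isotropic vectors are (x, +-i x), and on
   them Q is a multiple of x^2; the counts then come from F having (q - 1)/2
   nonzero squares. *)

Section FinFieldFacts.
Variable F : finFieldType.

Lemma pchar2_card_even : (2 \in [pchar F]) = ~~ odd #|F|.
Proof.
apply/idP/idP => [c2 |].
  have := finNzRing_gt1 F; rewrite (card_pprimeChar c2) oddX /= orbF.
  by case: (logn 2 _).
have [p p_pr cp] := finPcharP F.
rewrite (card_pprimeChar cp) oddX negb_or => /andP[_].
by case: (even_prime p_pr) cp => [-> // | ->].
Qed.

Lemma natr2_neq0_card_odd : (2%:R != 0 :> F) = odd #|F|.
Proof. by rewrite -[odd _]negbK -pchar2_card_even inE. Qed.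

Lemma expf_card_pred (x : F) : x != 0 -> x ^+ #|F|.-1 = 1.
Proof.
move=> xnz; apply: (mulfI xnz).
by rewrite -exprS prednK ?expf_card ?mulr1 // ltnW ?finNzRing_gt1.
Qed.

Lemma exists_sqrtN1 : (#|F| %% 4 = 1)%N -> exists i : F, i ^+ 2 = -1.
Proof.
move=> q4; have q_gt1 : (1 < #|F|)%N by exact: finNzRing_gt1.
set m := (#|F|.-1 %/ 2)%N.
have m_gt0 : (0 < m)%N by rewrite /m; lia.
have [x /andP[xnz xm_neq1]] : exists x : F, (x != 0) && (x ^+ m != 1).
  (* otherwise the q - 1 nonzero elements are roots of 'X^m - 1 *)
  apply/existsP/contraT; rewrite negb_exists => /forallP xm_eq1.
  have := @max_poly_roots _ ('X^m - 1) (enum [pred x : F | x != 0]).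
  rewrite -size_poly_eq0 size_XnsubC // enum_uniq -cardE cardC1.
  have -> : all (root ('X^m - 1)) (enum [pred x : F | x != 0]).
    apply/allP => x; rewrite mem_enum inE => xnz.
    by have := xm_eq1 x; rewrite xnz negbK rootE !hornerE subr_eq0.
  by move=> /(_ isT isT isT); rewrite /m; set q := #|F| in q4 *; lia.
have /eqP : (x ^+ m) ^+ 2 = 1.
  by rewrite -exprM -(expf_card_pred xnz); congr (_ ^+ _); rewrite /m; lia.
rewrite sqrf_eq1 (negbTE xm_neq1) => /eqP xmN1.
by exists (x ^+ (m %/ 2)); rewrite -exprM -xmN1; congr (_ ^+ _); rewrite /m; lia.
Qed.

Lemma sqr_neqN1 (x : F) : (#|F| %% 4 = 3)%N -> x ^+ 2 != -1.
Proof.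
move=> q4; apply/eqP => xN1.
have xnz : x != 0.
  by apply: contra_eq_neq xN1 => ->; rewrite expr0n eq_sym oppr_eq0 oner_eq0.
have : x ^+ #|F|.-1 = -1.
  have -> : (#|F|.-1 = 2 * ((#|F| %/ 4) * 2 + 1))%N by lia.
  by rewrite exprM xN1 exprD mulnC exprM sqrrN !expr1n mul1r expr1.
rewrite expf_card_pred // => /eqP; rewrite -addr_eq0.
by apply/negP; rewrite natr2_neq0_card_odd; lia.
Qed.

End FinFieldFacts.

Lemma card_le_double_imset (T rT : finType) (f : T -> rT) (s : T -> T) (A : {pred T}) :
  {in A &, forall x y, f x = f y -> y = x \/ y = s x} ->
  (#|A| <= 2 * #|f @: A|)%N.
Proof.
move=> fiber2; rewrite -sum1_card (partition_big_imset f) /= mulnC -sum_nat_const.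
apply: leq_sum => _ /imsetP[x xA ->]; rewrite sum1dep_card.
apply: leq_trans (_ : #|[set x; s x]| <= 2)%N; last by rewrite cards2 ltnS leq_b1.
apply: subset_leq_card; apply/subsetP => y; rewrite !inE => /andP[yA /eqP fyx].
by case: (fiber2 x y xA yA (esym fyx)) => ->; rewrite eqxx ?orbT.
Qed.

Lemma imsetT_inj (T : finType) (f : T -> T) : injective f -> [set f x | x : T] = [set: T].
Proof. by move=> f_inj; apply/eqP; rewrite eqEcard subsetT card_imset ?cardsT ?leqnn. Qed.

Lemma quadratic_fiber (F : fieldType) (a b c x y : F) : a != 0 ->
  a * x ^+ 2 + b * x + c = a * y ^+ 2 + b * y + c -> y = x \/ y = - x - b / a.
Proof.
move=> anz /eqP; rewrite -subr_eq0.
have -> : a * x ^+ 2 + b * x + c - (a * y ^+ 2 + b * y + c) = (x - y) * (a * (x + y) + b).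
  by ring.
rewrite mulf_eq0 subr_eq0 => /orP[/eqP-> | /eqP]; first by left.
move=> /(canRL (addrK b)); rewrite sub0r => /(canRL (mulKf anz)) xy.
by right; rewrite -[y](addKr x) xy mulrN [_^-1 * b]mulrC.
Qed.

Lemma card_quadratic_image (F : finFieldType) (a b c : F) : a != 0 ->
  leq (#|F| %/ 2)%N #|[set a * x ^+ 2 + b * x + c | x : F]|.
Proof.
move=> anz.
have := @card_le_double_imset _ _ (fun x => a * x ^+ 2 + b * x + c) (fun x => - x - b / a).
move=> /(_ F (fun x y _ _ => quadratic_fiber anz)) /(leq_div2r 2).
by rewrite mulKn.
Qed.

Section Squares.
Variable F : finFieldType.

Definition squares := [set x ^+ 2 | x : F].
Definition nzsquares := [set x ^+ 2 | x in [set x : F | x != 0]].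

Lemma card_nzsquares : 2%:R != 0 :> F -> #|nzsquares| = (#|F|.-1 %/ 2)%N.
Proof.
move=> two_nz; rewrite -[#|nzsquares|](mulnK _ (isT : (0 < 2)%N)); congr (_ %/ 2)%N.
rewrite /nzsquares; set A := [set x : F | x != 0].
have -> : #|F|.-1 = #|A| by rewrite -(cardsC1 (0 : F)); apply: eq_card => x; rewrite !inE.
rewrite -[in RHS]sum1_card (partition_big_imset (fun x : F => x ^+ 2)) /= -sum_nat_const.
apply: eq_bigr => _ /imsetP[x xA ->]; rewrite sum1dep_card.
move: xA; rewrite inE => xnz.
have -> : [set y | (y \in A) && (y ^+ 2 == x ^+ 2)] = [set x; - x].
  apply/setP => y; rewrite !inE eqf_sqr andb_idl //.
  by move=> /orP[/eqP-> | /eqP->]; rewrite ?oppr_eq0.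
by rewrite cards2 -addr_eq0 -mulr2n -mulr_natl mulf_eq0 negb_or two_nz xnz.
Qed.

Lemma mem_squares x : x ^+ 2 \in squares. Proof. exact: imset_f. Qed.

Lemma squares_nzsquares : squares = 0 |: nzsquares.
Proof.
apply/setP => y; rewrite !inE; apply/imsetP/orP => [[x _ ->] | [/eqP-> | /imsetP[x _ ->]]].
- have [-> | xnz] := eqVneq x 0; first by rewrite expr0n eqxx; left.
  by right; apply/imsetP; exists x; rewrite ?inE.
- by exists 0; rewrite ?inE ?expr0n.
- by exists x.
Qed.

Lemma card_squares : 2%:R != 0 :> F -> #|squares| = (#|F|.+1 %/ 2)%N.
Proof.
move=> two_nz; have q_gt1 : (1 < #|F|)%N by exact: finNzRing_gt1.
rewrite squares_nzsquares cardsU1 card_nzsquares //.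
suff -> : (0 : F) \notin nzsquares by set q := #|F| in q_gt1 *; lia.
by apply/imsetP => -[x]; rewrite inE => xnz /esym/eqP; rewrite expf_eq0 (negPf xnz) andbF.
Qed.

Lemma sum_two_squares (k : F) : 2%:R != 0 :> F -> exists x y : F, x ^+ 2 + y ^+ 2 = k.
Proof.
move=> two_nz; set B := [set k - s | s in squares].
have card_B : #|B| = #|squares| by apply: card_imset => s t /addrI/oppr_inj.
have q_gt1 : (1 < #|F|)%N by exact: finNzRing_gt1.
have q_odd : odd #|F| by rewrite -natr2_neq0_card_odd.
(* squares and k - squares each have (q + 1) / 2 elements, so they meet *)
have : (0 < #|squares :&: B|)%N.
  have := cardsUI squares B; have := max_card (squares :|: B).
  rewrite card_B card_squares //.
  by set q := #|F| in q_gt1 q_odd *; lia.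
rewrite card_gt0 => /set0Pn[_ /setIP[/imsetP[x _ ->] /imsetP[_ /imsetP[y _ ->] xy]]].
by exists x, y; rewrite xy subrK.
Qed.

End Squares.

Lemma herm_M_Nmat (F : finFieldType) n (M : 'M[F]_n) : herm_M (Nmat M) =1 herm_M M.
Proof.
move=> u; rewrite /herm_M; set g := fun i j => M i j * u 0 i * u 0 j.
(* split the sum over i, j into i <= j and i > j, and swap i, j in the second part *)
have -> : \sum_(i < n) \sum_(j < n) g i j =
    \sum_(i < n) \sum_(j < n) ((if (i <= j)%N then g i j else 0) + if (i < j)%N then g j i else 0).
  under [RHS]eq_bigr do rewrite big_split.
  rewrite big_split /= [X in _ + X]exchange_big /=.
  rewrite -big_split; apply: eq_bigr => i _; rewrite -big_split; apply: eq_bigr => j _ /=.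
  by case: leqP => _; rewrite ?addr0 ?add0r.
apply: eq_bigr => i _; apply: eq_bigr => j _; rewrite mxE /g.
have [<- | ne] := eqVneq i j; first by rewrite leqnn ltnn addr0.
case: ltngtP => [_ | _ | /val_inj ij]; rewrite ?mul0r ?addr0 //.
- by ring.
- by rewrite ij eqxx in ne.
Qed.

Lemma Numk_Nmat (F : finFieldType) n k (M : 'M[F]_n) : Numk k (Nmat M) = Numk k M.
Proof. exact/eq_imset/herm_M_Nmat. Qed.

Lemma Num0'_Nmat (F : finFieldType) n (M : 'M[F]_n) : Num0' (Nmat M) = Num0' M.
Proof. exact/eq_imset/herm_M_Nmat. Qed.

Section BinaryForm.
Variable F : finFieldType.
Implicit Types (M : 'M[F]_2) (x y k z : F).

Definition qform M x y :=
  M ord0 ord0 * x ^+ 2 + (M ord0 ord_max + M ord_max ord0) * x * y + M ord_max ord_max * y ^+ 2.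

Definition row2 x y : 'rV[F]_2 := \row_(j < 2) if j == ord0 then x else y.

Lemma row2_0 x y : row2 x y 0 ord0 = x. Proof. by rewrite mxE. Qed.
Lemma row2_1 x y : row2 x y 0 ord_max = y. Proof. by rewrite mxE. Qed.

Lemma row2_eq0 (u : 'rV[F]_2) : (u == 0) = (u 0 ord0 == 0) && (u 0 ord_max == 0).
Proof.
apply/eqP/andP => [-> | [/eqP u0 /eqP u1]]; first by rewrite !mxE.
apply/rowP => j; rewrite mxE.
by case: j => -[|[|//]] j_lt2; [rewrite -u0 | rewrite -u1]; congr (u 0 _); apply: val_inj.
Qed.

Lemma herm_selfE (u : 'rV[F]_2) : herm_self u = u 0 ord0 ^+ 2 + u 0 ord_max ^+ 2.
Proof.
by rewrite /herm_self !big_ord_recl big_ord0 addr0; congr (_ + u 0 _ ^+ 2); apply: val_inj.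
Qed.

Lemma herm_ME M (u : 'rV[F]_2) : herm_M M u = qform M (u 0 ord0) (u 0 ord_max).
Proof.
rewrite /herm_M !big_ord_recl !big_ord0 !addr0.
have -> : lift ord0 ord0 = ord_max :> 'I_2 by apply: val_inj.
by rewrite /qform; ring.
Qed.

Lemma NumkP k M z :
  reflect (exists x y, x ^+ 2 + y ^+ 2 = k /\ z = qform M x y) (z \in Numk k M).
Proof.
apply: (iffP imsetP) => [[u] | [x [y [xyk ->]]]].
  by rewrite inE => /eqP uk ->; exists (u 0 ord0), (u 0 ord_max); rewrite -herm_selfE herm_ME.
by exists (row2 x y); rewrite ?inE ?herm_selfE ?herm_ME !row2_0 !row2_1 ?xyk.
Qed.

Lemma Num0'P M z :
  reflect (exists x y, [/\ (x != 0) || (y != 0), x ^+ 2 + y ^+ 2 = 0 & z = qform M x y])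
          (z \in Num0' M).
Proof.
apply: (iffP imsetP) => [[u] | [x [y [xy_nz xy0 ->]]]].
  rewrite inE row2_eq0 negb_and => /andP[u_nz /eqP u0] ->.
  by exists (u 0 ord0), (u 0 ord_max); rewrite -herm_selfE herm_ME.
exists (row2 x y); last by rewrite herm_ME !row2_0 !row2_1.
by rewrite inE row2_eq0 herm_selfE !row2_0 !row2_1 negb_and xy_nz xy0 eqxx.
Qed.

Lemma qform_skew M x y : M ord0 ord_max + M ord_max ord0 = 0 ->
  qform M x y = M ord_max ord_max * (x ^+ 2 + y ^+ 2) + (M ord0 ord0 - M ord_max ord_max) * x ^+ 2.
Proof. by rewrite /qform => ->; ring. Qed.

End BinaryForm.

Lemma Num0'_card_mod4_3 (F : finFieldType) (M : 'M[F]_2) :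
  (#|F| %% 4 = 3)%N -> Num0' M = set0.
Proof.
move=> q4; apply/setP => z; rewrite inE; apply/Num0'P => -[x [y [xy_nz xy0 _]]].
have yx : y ^+ 2 = - x ^+ 2 by apply/eqP; rewrite -addr_eq0 addrC xy0.
have [x0 | xnz] := eqVneq x 0.
  move: yx xy_nz; rewrite x0 expr0n /= oppr0 => /eqP.
  by rewrite sqrf_eq0 => /eqP->; rewrite eqxx.
by have /eqP[] := sqr_neqN1 (y / x) q4; rewrite expr_div_n yx mulNr divff // expf_neq0.
Qed.

Section Pchar2.
Variable F : finFieldType.
Hypothesis F2 : 2 \in [pchar F].

Lemma sqrrD_pchar2 (x y : F) : (x + y) ^+ 2 = x ^+ 2 + y ^+ 2.
Proof. by rewrite sqrrD (mulrn_pchar F2) addr0. Qed.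

Lemma sqr_inj_pchar2 : injective (fun x : F => x ^+ 2).
Proof. by move=> x y /eqP; rewrite eqf_sqr (oppr_pchar2 F2) orbb => /eqP. Qed.

Lemma exists_sqrt_pchar2 (k : F) : exists t, t ^+ 2 = k.
Proof. by have [g _ gK] := injF_bij sqr_inj_pchar2; exists (g k); rewrite gK. Qed.

Lemma sum_sqr_pchar2 (t x y : F) : (x ^+ 2 + y ^+ 2 == t ^+ 2) = (y == t + x).
Proof.
rewrite -sqrrD_pchar2 (inj_eq sqr_inj_pchar2); apply/eqP/eqP => [<- | ->].
  by rewrite addrAC (addrr_pchar2 F2) add0r.
by rewrite addrCA (addrr_pchar2 F2) addr0.
Qed.

Variable M : 'M[F]_2.
Local Notation m11 := (M ord0 ord0).
Local Notation m22 := (M ord_max ord_max).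
Local Notation c := (M ord0 ord_max + M ord_max ord0).
Local Notation s := (m22 + M ord0 ord_max + M ord_max ord0 + m11).

Lemma qform_pchar2 x t : qform M x (t + x) = s * x ^+ 2 + c * t * x + m22 * t ^+ 2.
Proof.
have -> : qform M x (t + x) = s * x ^+ 2 + c * t * x + m22 * t ^+ 2 + 2%:R * (m22 * t * x).
  by rewrite /qform; ring.
by rewrite (pcharf0 F2) mul0r addr0.
Qed.

Lemma Numk_pchar2 k t : t ^+ 2 = k ->
  Numk k M = [set s * x ^+ 2 + c * t * x + m22 * t ^+ 2 | x : F].
Proof.
move=> <-; apply/setP => z; apply/NumkP/imsetP => [[x [y [/eqP xyt ->]]] | [x _ ->]].
  by exists x; rewrite // -qform_pchar2 -(eqP _ : y = t + x) -?sum_sqr_pchar2.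
by exists x, (t + x); rewrite qform_pchar2; split=> //; apply/eqP; rewrite sum_sqr_pchar2.
Qed.

Lemma Num0'_pchar2 : Num0' M = [set s * x ^+ 2 | x in [set x : F | x != 0]].
Proof.
have sum_sqr0 (x y : F) : (x ^+ 2 + y ^+ 2 == 0) = (y == x).
  by have := sum_sqr_pchar2 0 x y; rewrite expr0n add0r.
have qform_xx (x : F) : qform M x x = s * x ^+ 2 by rewrite /qform; ring.
apply/setP => z; apply/Num0'P/imsetP => [[x [y [xy_nz /eqP]]] | [x]].
  rewrite sum_sqr0 => /eqP yx ->; subst y; rewrite orbb in xy_nz.
  by exists x; rewrite ?inE ?qform_xx.
rewrite inE => xnz ->; exists x, x.
by rewrite xnz qform_xx; split=> //; apply/eqP; rewrite sum_sqr0.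
Qed.

Lemma Num0'_pchar2_neq0 : s != 0 -> Num0' M = [set x | x != 0].
Proof.
move=> snz; apply/setP => z; rewrite Num0'_pchar2 inE; apply/imsetP/idP => [[x] | znz].
  by rewrite inE => xnz ->; rewrite mulf_neq0 // expf_neq0.
have [t tE] := exists_sqrt_pchar2 (z / s).
exists t; last by rewrite tE mulrC divfK.
by rewrite inE -sqrf_eq0 tE mulf_eq0 invr_eq0 negb_or znz snz.
Qed.

Lemma Num0'_pchar2_eq0 : s = 0 -> Num0' M = [set 0].
Proof.
move=> s0; apply/setP => z; rewrite Num0'_pchar2 s0 inE.
apply/imsetP/eqP => [[x _ ->] | ->]; first by rewrite mul0r.
by exists 1; rewrite ?inE ?oner_eq0 ?mul0r.
Qed.

Lemma card_Numk_pchar2 k : s != 0 -> leq (#|F| %/ 2)%N #|Numk k M|.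
Proof.
by move=> snz; have [t tk] := exists_sqrt_pchar2 k; rewrite (Numk_pchar2 tk) card_quadratic_image.
Qed.

Lemma Numk_pchar2_eq0 k : s = 0 -> k != 0 -> Numk k M = [set: F] \/ #|Numk k M| = 1%N.
Proof.
move=> s0 knz; have [t tk] := exists_sqrt_pchar2 k.
have tnz : t != 0 by apply: contraNneq knz => t0; rewrite -tk t0 expr0n.
rewrite (Numk_pchar2 tk) s0.
have [c0 | cnz] := eqVneq c 0.
  right; apply/eqP/cards1P; exists (m22 * t ^+ 2); apply/setP => z; rewrite !inE.
  by rewrite c0; apply/imsetP/eqP => [[x _ ->] | ->]; [| exists 0]; rewrite // !mul0r !add0r.
left; apply: imsetT_inj => x y; rewrite !mul0r !add0r => /addIr/mulfI; apply.
by rewrite mulf_neq0.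
Qed.

Lemma Numk_pchar2_diag k : c = 0 -> m11 != m22 -> Numk k M = [set: F].
Proof.
move=> c0 m11_neq; have [t tk] := exists_sqrt_pchar2 k.
have snz : s != 0.
  have -> : s = c + (m11 - m22) by rewrite (oppr_pchar2 F2); ring.
  by rewrite c0 add0r subr_eq0.
rewrite (Numk_pchar2 tk) c0; apply: imsetT_inj => x y.
by rewrite !mul0r !addr0 => /addIr/(mulfI snz)/sqr_inj_pchar2.
Qed.

End Pchar2.

Section SqrtN1.
Variables (F : finFieldType) (M : 'M[F]_2) (i : F).
Hypotheses (iN1 : i ^+ 2 = -1) (two_nz : 2%:R != 0 :> F).
Local Notation m11 := (M ord0 ord0).
Local Notation m22 := (M ord_max ord_max).
Local Notation c := (M ord0 ord_max + M ord_max ord0).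

Lemma isotropic_sqrtN1 (w x : F) : w ^+ 2 = -1 -> x ^+ 2 + (w * x) ^+ 2 = 0.
Proof. by move=> wN1; rewrite exprMn wN1 mulN1r addrN. Qed.

Lemma card_Numk0_neq0 : c != 0 -> leq (#|F|.-1 %/ 2)%N #|Numk 0 M :\ 0|.
Proof.
move=> cnz; pose a w := m11 + c * w + m22 * w ^+ 2.
have qform_w x w : qform M x (w * x) = a w * x ^+ 2 by rewrite /qform /a; ring.
(* a i - a (- i) = 2 c i, so a does not vanish at both square roots of -1 *)
have [w [wN1 aw_nz]] : exists w, w ^+ 2 = -1 /\ a w != 0.
  have [ai0 | ]:= eqVneq (a i) 0; last by exists i.
  exists (- i); rewrite sqrrN iN1; split=> //; apply: contraNneq two_nz => a_i0.
  have : a i - a (- i) = 2%:R * c * i by rewrite /a; ring.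
  rewrite ai0 a_i0 subrr => /esym/eqP; rewrite !mulf_eq0 (negPf cnz) orbF.
  case/orP => // /eqP i0; move: iN1; rewrite i0 expr0n /= => /eqP.
  by rewrite eq_sym oppr_eq0 oner_eq0.
have sub : [set a w * s | s in nzsquares F] \subset Numk 0 M :\ 0.
  apply/subsetP => _ /imsetP[_ /imsetP[x xnz ->] ->]; rewrite inE in xnz.
  rewrite !inE mulf_neq0 ?expf_neq0 //=.
  by apply/NumkP; exists x, (w * x); rewrite qform_w isotropic_sqrtN1.
apply: leq_trans (subset_leq_card sub).
by rewrite (card_imset _ (mulfI aw_nz)) card_nzsquares.
Qed.

Lemma Numk_scalar k : c = 0 -> m11 = m22 -> Numk k M = [set k * m11].
Proof.
move=> c0 m11E; apply/setP => z; rewrite inE; apply/NumkP/eqP => [[x [y [xyk ->]]] | ->].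
  by rewrite qform_skew // m11E subrr mul0r addr0 xyk mulrC.
have [x [y xyk]] := sum_two_squares k two_nz.
by exists x, y; rewrite qform_skew // m11E subrr mul0r addr0 xyk mulrC.
Qed.

Lemma mem0_Num0'_scalar : c = 0 -> m11 = m22 -> 0 \in Num0' M.
Proof.
move=> c0 m11E; apply/Num0'P; exists 1, i.
rewrite oner_neq0 expr1n iN1 addrN qform_skew // m11E subrr mul0r.
by rewrite expr1n iN1 addrN mulr0 addr0.
Qed.

Section Diagonal.
Hypotheses (c0 : c = 0) (m11_neq : m11 != m22).
Let d := m11 - m22.
Let d_nz : d != 0. Proof. by rewrite subr_eq0. Qed.
Let shift k s := m22 * k + d * s.
Let shift_inj k : injective (shift k). Proof. by move=> s t /addrI/(mulfI d_nz). Qed.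

Lemma Numk_sub_shift k : Numk k M \subset shift k @: squares F.
Proof.
apply/subsetP => _ /NumkP[x [y [xyk ->]]].
by rewrite qform_skew // xyk; apply/imsetP; exists (x ^+ 2); rewrite ?mem_squares.
Qed.

Lemma card_Numk_diag k : leq #|Numk k M| (#|F|.+1 %/ 2)%N.
Proof.
apply: leq_trans (subset_leq_card (Numk_sub_shift k)) _.
by rewrite card_imset ?card_squares.
Qed.

Lemma card_Numk0_diag : #|Numk 0 M| = (#|F|.+1 %/ 2)%N.
Proof.
have -> : Numk 0 M = shift 0 @: squares F.
  apply/eqP; rewrite eqEsubset Numk_sub_shift.
  apply/subsetP => _ /imsetP[_ /imsetP[x _ ->] ->].
  by apply/NumkP; exists x, (i * x); rewrite qform_skew // isotropic_sqrtN1.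
by rewrite card_imset ?card_squares.
Qed.

Lemma card_Num0'_diag : #|Num0' M| = (#|F|.-1 %/ 2)%N.
Proof.
have -> : Num0' M = shift 0 @: nzsquares F.
  apply/setP => z; apply/Num0'P/imsetP => [[x [y [xy_nz xy0 ->]]] | [_ /imsetP[x xnz ->] ->]].
    exists (x ^+ 2); last by rewrite qform_skew // xy0.
    apply/imset_f; rewrite inE; apply: contraTneq xy_nz => x0.
    by move: xy0; rewrite x0 expr0n add0r => /eqP; rewrite sqrf_eq0 => /eqP->; rewrite eqxx.
  rewrite inE in xnz; exists x, (i * x).
  by rewrite xnz qform_skew // isotropic_sqrtN1.
by rewrite card_imset ?card_nzsquares.
Qed.

End Diagonal.
End SqrtN1.

Theorem proposition5 (F : finFieldType) (M : 'M[F]_2) :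
  let q := #|F| in
  let m11 := M ord0 ord0 in
  let m12 := M ord0 ord_max in
  let m21 := M ord_max ord0 in
  let m22 := M ord_max ord_max in
  let N := Nmat M in
  [/\ Num0' M = Num0' N,
      (forall k : F, Numk k M = Numk k N),
      (modn q 4 = 3%N -> Num0' M = set0),
      (~~ odd q ->
        [/\ (m22 + m12 + m21 + m11 != 0 ->
               Num0' M = [set x : F | x != 0] /\
               (forall k : F, k != 0 -> leq (divn q 2) #|Numk k M|)),
            (m22 + m12 + m21 + m11 = 0 ->
               Num0' M = [set 0 : F] /\
               (forall k : F, k != 0 -> Numk k M = [set: F] \/ #|Numk k M| = 1%N))
          & (m12 + m21 = 0 -> m11 != m22 ->
               forall k : F, k != 0 -> Numk k M = [set: F])])
    & (modn q 4 = 1%N ->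
        [/\ (m12 + m21 != 0 -> leq (divn q.-1 2) #|Numk 0 M :\ 0|),
            (m12 + m21 = 0 -> m11 = m22 ->
               (forall k : F, Numk k M = [set k * m11]) /\ 0 \in Num0' M)
          & (m12 + m21 = 0 -> m11 != m22 ->
               [/\ (forall k : F, leq #|Numk k M| (divn q.+1 2)),
                   #|Numk 0 M| = (divn q.+1 2)%N
                 & #|Num0' M| = (divn q.-1 2)%N])])].
Proof.
move=> q m11 m12 m21 m22 N; split.
- exact/esym/Num0'_Nmat.
- by move=> k; rewrite Numk_Nmat.
- exact: Num0'_card_mod4_3.
- rewrite -pchar2_card_even => F2; split.
  + move=> snz; split; first exact: Num0'_pchar2_neq0.
    by move=> k _; apply: card_Numk_pchar2.
  + by move=> s0; split; [apply: Num0'_pchar2_eq0 | move=> k; apply: Numk_pchar2_eq0].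
  + by move=> c0 m11_neq k _; apply: Numk_pchar2_diag.
- move=> q4; have [i iN1] := exists_sqrtN1 q4.
  have two_nz : 2%:R != 0 :> F by rewrite natr2_neq0_card_odd; rewrite /q in q4; lia.
  split.
  + exact: card_Numk0_neq0 iN1 two_nz.
  + move=> c0 m11E; split; last exact: mem0_Num0'_scalar iN1 c0 m11E.
    by move=> k; apply: Numk_scalar two_nz k c0 m11E.
  + move=> c0 m11_neq; split.
    * exact: card_Numk_diag two_nz c0 m11_neq.
    * exact: card_Numk0_diag iN1 two_nz c0 m11_neq.
    * exact: card_Num0'_diag iN1 two_nz c0 m11_neq.
Qed.
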